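(* Let $a,b,c,p\in\mathbb{C}$ with $-c\notin\mathbb{N}\cup\{0\}$ and $c\neq2$. Suppose that $\cosh(pz)F(a,b;c;z)=\sum_{n=0}^\infty u_nz^n$ for $|z|<1$. Then $u_0=1$, $u_1=\frac{ab}{c}$, $u_2=\frac{(a)_2(b)_2}{2(c)_2}+\frac{p^2}{2}$, $u_3=\frac{abp^2}{2c}+\frac{(a)_3(b)_3}{6(c)_3}$, $u_4=\frac{(a)_2(b)_2p^2}{4(c)_2}+\frac{(a)_4(b)_4}{24(c)_4}+\frac{p^4}{24}$, $u_5=\frac{abp^4}{24c}+\frac{(a)_3(b)_3p^2}{12(c)_3}+\frac{(a)_5(b)_5}{120(c)_5}$, $u_6=\frac{(a)_2(b)_2p^4}{48(c)_2}+\frac{(a)_4(b)_4p^2}{48(c)_4}+\frac{(a)_6(b)_6}{720(c)_6}+\frac{p^6}{720}$, $u_7=\frac{abp^6}{720c}+\frac{(a)_3(b)_3p^4}{144(c)_3}+\frac{(a)_5(b)_5p^2}{240(c)_5}+\frac{(a)_7(b)_7}{5040(c)_7}$, $u_8=\frac{(a)_2(b)_2p^6}{1440(c)_2}+\frac{(a)_4(b)_4p^4}{576(c)_4}+\frac{(a)_6(b)_6p^2}{1440(c)_6}+\frac{(a)_8(b)_8}{40320(c)_8}+\frac{p^8}{40320}$, $u_9=\frac{abp^8}{40320c}+\frac{(a)_3(b)_3p^6}{4320(c)_3}+\frac{(a)_5(b)_5p^4}{2880(c)_5}+\frac{(a)_7(b)_7p^2}{10080(c)_7}+\frac{(a)_9(b)_9}{362880(c)_9}$,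 and for all integers $n\ge9$, \[ u_{n+1}=\sum_{i=0}^9\delta_i(n)u_{n-i}, \] where $D(n)=(c-2)c\,n(n+1)(c+n-1)(c+n)$ and \[ \delta_0(n)=\frac{2(n-1)^2\left(a(c-2b)+c(b+c-3)\right)+4(c-2)(n-1)\left(c(a+b)-ab\right)+2ab(c-2)(c+1)}{(c-2)c(n+1)(c+n)}, \] \[ \begin{aligned} \delta_1(n)=\frac{1}{D(n)}\Big[&-(n-4)(n-3)(n-2)(n-1)\left(a^2+4c(a+b)-10ab+b^2+c^2-6c-4p^2-1\right)\\ &+2(n-3)(n-2)(n-1)\Big(a^2(4b-3c)+a\left(2(b-1)c+4b(b+3)-3c^2\right)-c\left(b(3b+3c+2)+c-4p^2-13\right)\Big)\\ &+(n-2)(n-1)\Big(a^2\left(8b^2+b(4c+6)-6c^2+c\right)+a\left(-(10b+7)c^2+4(b(b+3)+3)c+6b(b+1)\right)\\ &\qquad+c\left(b^2(1-6c)+b(12-7c)+6(c-2)p^2+c+11\right)\Big)\\ &+(c-2)\left(a^2b(c-b(c+2))+ab(b+1)c+c^2(c+1)p^2\right)\\ &+2(n-1)\left(a^2b(b(4c-2)-3(c-1)c)-abc(3b(c-1)+c-5)+(c-2)c(c+1)p^2\right)\Big], \end{aligned} \] \[ \begin{aligned} \delta_2(n)=\frac{2}{D(n)}\Big[&(n-5)(n-4)(n-3)(n-2)\left(a^2+a(c-4b)+(b-1)(b+c+1)-8p^2\right)\\ &+(n-4)(n-3)(n-2)\Big(a^3+a^2(-5b+3c+2)-a\left(b(5b-2c+14)-3c+4p^2+1\right)+(b+3c+1)\left(b^2+b-4p^2-2\right)\Big)\\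 &-(n-3)(n-2)\Big(a^3(b-2c)+a^2(b(10b+9)-4(b+1)c)+a\left(b(b+1)(b-4c+8)+6cp^2+2c\right)\\ &\qquad+2c\left(-b^3-2b^2+3p^2(b+c-3)+b+2\right)\Big)\\ &-(n-2)\Big(a^3b(4b-3c+2)+a^2b(2b+1)(2b-c)-a\left(p^2(10b-3c^2+c)+(b-1)b(b(3c-2)+4c-2)\right)\\ &\qquad+cp^2\left(b(3c-1)+c^2-9\right)\Big)\\ &-(c+1)p^2\left(c^2(2a+2b+1)-3(a+1)(b+1)c+4ab\right)\\ &-(a-1)a(b-1)b\left(-c(a+b+1)+2ab+a+b+1\right)\Big], \end{aligned} \] \[ \begin{aligned} \delta_3(n)=-\frac{1}{D(n)}\Big[&(n-6)(n-5)(n-4)(n-3)\left((a-b)^2-24p^2-1\right)\\ &+2(n-5)(n-4)(n-3)\Big(a^3-a^2(b-2)-a\left(b(b+4)+12p^2+1\right)+b^3+2b^2-12p^2(b+c+1)-b-2\Big)\\ &+(n-4)(n-3)\Big(a^4+a^3(2b+3)-a^2\left(6b^2+3b+6p^2-1\right)+a\left(-12p^2(b+2c)+b(b(2b-3)-8)-3\right)\\ &\qquad-6p^2\left(b^2+4bc+(c-6)c-1\right)+(b+1)^2\left(b^2+b-2\right)+8p^4\Big)\\ &+2(n-3)\Big(-p^2\left(c^2(3a+3b+1)+c(a+b)(3a+3b+2)-40ab-13c\right)+ab(a-b-1)(a-b+1)(a+b)+4cp^4\Big)\\ &+a^4(b-1)b+a^3b(-2b^2+b+1)+a^2\left(b^4+b^3+p^2\left(-12b^2+2b(6c+5)-6c^2+c\right)-3b^2+b\right)\\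 &+ap^2\left(-(6b+7)c^2+4(b(3b+2)+3)c+2b(5b-11)\right)\\ &-a(b-1)^2b(b+1)+cp^2\left(b^2(1-6c)+b(12-7c)+5(c-2)p^2+c+11\right)\Big], \end{aligned} \] \[ \begin{aligned} \delta_4(n)=\frac{2p^2}{D(n)}\Big[&-8(n-7)(n-6)(n-5)(n-4)-4(n-6)(n-5)(n-4)\left(3(a+b+1)+c\right)\\ &+2(n-5)(n-4)\left(8p^2-3(a+b-1)(a+b+c+1)\right)\\ &+(n-4)\Big(-a^3-a^2(3b+3c+2)+a\left(b(-3b-6c+46)-3c+4p^2+1\right)-(b+3c+1)\left(b^2+b-4p^2-2\right)\Big)\\ &+a^3(3b-2c)+a^2(3(5-2b)b-4c)+a\left(p^2(5c-6b)-4bc+3b(b(b+5)-4)+2c\right)\\ &+5cp^2(b+c-3)-2(b-1)(b+1)(b+2)c\Big], \end{aligned} \] \[ \begin{aligned} \delta_5(n)=\frac{p^2}{D(n)}\Big[&4(n-8)(n-7)(n-6)(n-5)+8(n-7)(n-6)(n-5)(a+b+1)\\ &+6(n-6)(n-5)\left((a+b)^2-8p^2-1\right)\\ &-2(n-5)\left(-a^3-3a^2b-2a^2-3ab^2+12p^2(a+b+c+1)+16ab+a-b^3-2b^2+b+2\right)\\ &+a^4+a^3(3-2b)+a^2\left(b(6b-11)-5p^2+1\right)-a\left(2b^3+11b^2-2b(13p^2+6)+20cp^2+3\right)\\ &-5p^2\left(b^2+4bc+(c-6)c-1\right)+(b+1)^2\left(b^2+b-2\right)+4p^4\Big], \end{aligned}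 \] \[ \delta_6(n)=\frac{2p^4\left(5a^2+a(-8b+5c+12n-72)+5b^2+5bc+12b(n-6)+4n(c+4n)-29c-196n-8p^2+595\right)}{D(n)}, \] \[ \delta_7(n)=\frac{p^4\left(-5a^2+2a(b-4n+28)-5b^2-8b(n-7)-8(n-14)n+24p^2-387\right)}{D(n)}, \] \[ \delta_8(n)=-\frac{16p^6}{D(n)},\qquad \delta_9(n)=\frac{4p^6}{D(n)}. \]
   Context: For $a\in\mathbb{C}$, $(a)_n=a(a+1)\cdots(a+n-1)$ denotes the Pochhammer symbol, with $(a)_0=1$. For $a,b,c\in\mathbb{C}$ with $-c\notin\mathbb{N}\cup\{0\}$, the Gaussian hypergeometric function is $F(a,b;c;z)=\sum_{n=0}^\infty \frac{(a)_n(b)_n}{(c)_n\,n!}z^n$, $|z|<1$. *)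

From HB Require Import structures.
From mathcomp Require Import all_boot all_order all_algebra.
From mathcomp Require Import all_classical all_reals all_analysis.
From mathcomp Require Import complex.
Import Order.TTheory GRing.Theory Num.Theory.
Import ComplexField.
Import numFieldTopology.Exports numFieldNormedType.Exports.

Set Implicit Arguments.
Unset Strict Implicit.
Unset Printing Implicit Defensive.

Local Open Scope classical_set_scope.
Local Open Scope ring_scope.

(* The complex numbers R[i] with their usual (modulus) norm and the induced
   topology, so that convergence of complex series can be stated. *)
HB.instance Definition _ (R : rcfType) := NormedModule.copy R[i] (R[i])^o.

Section Defs.
Variable R : realType.
Local Notation C := R[i].

Definition poch (a : C) (n : nat) : C := \prod_(k < n) (a + k%:R).

Definition hypF (a b c z : C) : C :=
  limn (series (fun n : nat => poch a n * poch b n / (poch c n * n`!%:R) * z ^+ n)).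

Definition ccosh (w : C) : C :=
  limn (series (fun k : nat => w ^+ (2 * k) / (2 * k)`!%:R)).

Definition Dn (c : C) (n : nat) : C :=
  let N : C := n%:R in (c - 2) * c * N * (N + 1) * (c + N - 1) * (c + N).

Definition delta0 (a b c p : C) (n : nat) : C :=
  let N : C := n%:R in
  (2 * (N - 1) ^+ 2 * (a * (c - 2 * b) + c * (b + c - 3))
   + 4 * (c - 2) * (N - 1) * (c * (a + b) - a * b)
   + 2 * a * b * (c - 2) * (c + 1))
  / ((c - 2) * c * (N + 1) * (c + N)).

Definition delta1 (a b c p : C) (n : nat) : C :=
  let N : C := n%:R in
  1 / Dn c n *
  ( - (N - 4) * (N - 3) * (N - 2) * (N - 1)
        * (a ^+ 2 + 4 * c * (a + b) - 10 * a * b + b ^+ 2 + c ^+ 2 - 6 * c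
           - 4 * p ^+ 2 - 1)
    + 2 * (N - 3) * (N - 2) * (N - 1)
        * (a ^+ 2 * (4 * b - 3 * c)
           + a * (2 * (b - 1) * c + 4 * b * (b + 3) - 3 * c ^+ 2)
           - c * (b * (3 * b + 3 * c + 2) + c - 4 * p ^+ 2 - 13))
    + (N - 2) * (N - 1)
        * (a ^+ 2 * (8 * b ^+ 2 + b * (4 * c + 6) - 6 * c ^+ 2 + c)
           + a * (- (10 * b + 7) * c ^+ 2 + 4 * (b * (b + 3) + 3) * c
                  + 6 * b * (b + 1))
           + c * (b ^+ 2 * (1 - 6 * c) + b * (12 - 7 * c)
                  + 6 * (c - 2) * p ^+ 2 + c + 11))
    + (c - 2) * (a ^+ 2 * b * (c - b * (c + 2)) + a * b * (b + 1) * c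
                 + c ^+ 2 * (c + 1) * p ^+ 2)
    + 2 * (N - 1)
        * (a ^+ 2 * b * (b * (4 * c - 2) - 3 * (c - 1) * c)
           - a * b * c * (3 * b * (c - 1) + c - 5)
           + (c - 2) * c * (c + 1) * p ^+ 2)).

Definition delta2 (a b c p : C) (n : nat) : C :=
  let N : C := n%:R in
  2 / Dn c n *
  ( (N - 5) * (N - 4) * (N - 3) * (N - 2)
        * (a ^+ 2 + a * (c - 4 * b) + (b - 1) * (b + c + 1) - 8 * p ^+ 2)
    + (N - 4) * (N - 3) * (N - 2)
        * (a ^+ 3 + a ^+ 2 * (- 5 * b + 3 * c + 2)
           - a * (b * (5 * b - 2 * c + 14) - 3 * c + 4 * p ^+ 2 + 1)
           + (b + 3 * c + 1) * (b ^+ 2 + b - 4 * p ^+ 2 - 2))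
    - (N - 3) * (N - 2)
        * (a ^+ 3 * (b - 2 * c) + a ^+ 2 * (b * (10 * b + 9) - 4 * (b + 1) * c)
           + a * (b * (b + 1) * (b - 4 * c + 8) + 6 * c * p ^+ 2 + 2 * c)
           + 2 * c * (- b ^+ 3 - 2 * b ^+ 2 + 3 * p ^+ 2 * (b + c - 3) + b + 2))
    - (N - 2)
        * (a ^+ 3 * b * (4 * b - 3 * c + 2) + a ^+ 2 * b * (2 * b + 1) * (2 * b - c)
           - a * (p ^+ 2 * (10 * b - 3 * c ^+ 2 + c)
                  + (b - 1) * b * (b * (3 * c - 2) + 4 * c - 2))
           + c * p ^+ 2 * (b * (3 * c - 1) + c ^+ 2 - 9))
    - (c + 1) * p ^+ 2 * (c ^+ 2 * (2 * a + 2 * b + 1) - 3 * (a + 1) * (b + 1) * c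
                          + 4 * a * b)
    - (a - 1) * a * (b - 1) * b * (- c * (a + b + 1) + 2 * a * b + a + b + 1)).

Definition delta3 (a b c p : C) (n : nat) : C :=
  let N : C := n%:R in
  - (1 / Dn c n) *
  ( (N - 6) * (N - 5) * (N - 4) * (N - 3) * ((a - b) ^+ 2 - 24 * p ^+ 2 - 1)
    + 2 * (N - 5) * (N - 4) * (N - 3)
        * (a ^+ 3 - a ^+ 2 * (b - 2) - a * (b * (b + 4) + 12 * p ^+ 2 + 1)
           + b ^+ 3 + 2 * b ^+ 2 - 12 * p ^+ 2 * (b + c + 1) - b - 2)
    + (N - 4) * (N - 3)
        * (a ^+ 4 + a ^+ 3 * (2 * b + 3)
           - a ^+ 2 * (6 * b ^+ 2 + 3 * b + 6 * p ^+ 2 - 1)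
           + a * (- 12 * p ^+ 2 * (b + 2 * c) + b * (b * (2 * b - 3) - 8) - 3)
           - 6 * p ^+ 2 * (b ^+ 2 + 4 * b * c + (c - 6) * c - 1)
           + (b + 1) ^+ 2 * (b ^+ 2 + b - 2) + 8 * p ^+ 4)
    + 2 * (N - 3)
        * (- p ^+ 2 * (c ^+ 2 * (3 * a + 3 * b + 1)
                       + c * (a + b) * (3 * a + 3 * b + 2) - 40 * a * b - 13 * c)
           + a * b * (a - b - 1) * (a - b + 1) * (a + b) + 4 * c * p ^+ 4)
    + a ^+ 4 * (b - 1) * b + a ^+ 3 * b * (- 2 * b ^+ 2 + b + 1)
    + a ^+ 2 * (b ^+ 4 + b ^+ 3
                + p ^+ 2 * (- 12 * b ^+ 2 + 2 * b * (6 * c + 5) - 6 * c ^+ 2 + c)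
                - 3 * b ^+ 2 + b)
    + a * p ^+ 2 * (- (6 * b + 7) * c ^+ 2 + 4 * (b * (3 * b + 2) + 3) * c
                    + 2 * b * (5 * b - 11))
    - a * (b - 1) ^+ 2 * b * (b + 1)
    + c * p ^+ 2 * (b ^+ 2 * (1 - 6 * c) + b * (12 - 7 * c) + 5 * (c - 2) * p ^+ 2
                    + c + 11)).

Definition delta4 (a b c p : C) (n : nat) : C :=
  let N : C := n%:R in
  2 * p ^+ 2 / Dn c n *
  ( - 8 * (N - 7) * (N - 6) * (N - 5) * (N - 4)
    - 4 * (N - 6) * (N - 5) * (N - 4) * (3 * (a + b + 1) + c)
    + 2 * (N - 5) * (N - 4) * (8 * p ^+ 2 - 3 * (a + b - 1) * (a + b + c + 1))
    + (N - 4)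
        * (- a ^+ 3 - a ^+ 2 * (3 * b + 3 * c + 2)
           + a * (b * (- 3 * b - 6 * c + 46) - 3 * c + 4 * p ^+ 2 + 1)
           - (b + 3 * c + 1) * (b ^+ 2 + b - 4 * p ^+ 2 - 2))
    + a ^+ 3 * (3 * b - 2 * c) + a ^+ 2 * (3 * (5 - 2 * b) * b - 4 * c)
    + a * (p ^+ 2 * (5 * c - 6 * b) - 4 * b * c + 3 * b * (b * (b + 5) - 4) + 2 * c)
    + 5 * c * p ^+ 2 * (b + c - 3) - 2 * (b - 1) * (b + 1) * (b + 2) * c).

Definition delta5 (a b c p : C) (n : nat) : C :=
  let N : C := n%:R in
  p ^+ 2 / Dn c n *
  ( 4 * (N - 8) * (N - 7) * (N - 6) * (N - 5)
    + 8 * (N - 7) * (N - 6) * (N - 5) * (a + b + 1)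
    + 6 * (N - 6) * (N - 5) * ((a + b) ^+ 2 - 8 * p ^+ 2 - 1)
    - 2 * (N - 5)
        * (- a ^+ 3 - 3 * a ^+ 2 * b - 2 * a ^+ 2 - 3 * a * b ^+ 2
           + 12 * p ^+ 2 * (a + b + c + 1) + 16 * a * b + a - b ^+ 3
           - 2 * b ^+ 2 + b + 2)
    + a ^+ 4 + a ^+ 3 * (3 - 2 * b) + a ^+ 2 * (b * (6 * b - 11) - 5 * p ^+ 2 + 1)
    - a * (2 * b ^+ 3 + 11 * b ^+ 2 - 2 * b * (13 * p ^+ 2 + 6) + 20 * c * p ^+ 2 + 3)
    - 5 * p ^+ 2 * (b ^+ 2 + 4 * b * c + (c - 6) * c - 1)
    + (b + 1) ^+ 2 * (b ^+ 2 + b - 2) + 4 * p ^+ 4).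

Definition delta6 (a b c p : C) (n : nat) : C :=
  let N : C := n%:R in
  2 * p ^+ 4 * (5 * a ^+ 2 + a * (- 8 * b + 5 * c + 12 * N - 72) + 5 * b ^+ 2
                + 5 * b * c + 12 * b * (N - 6) + 4 * N * (c + 4 * N) - 29 * c
                - 196 * N - 8 * p ^+ 2 + 595)
  / Dn c n.

Definition delta7 (a b c p : C) (n : nat) : C :=
  let N : C := n%:R in
  p ^+ 4 * (- 5 * a ^+ 2 + 2 * a * (b - 4 * N + 28) - 5 * b ^+ 2 - 8 * b * (N - 7)
            - 8 * (N - 14) * N + 24 * p ^+ 2 - 387)
  / Dn c n.

Definition delta8 (a b c p : C) (n : nat) : C := - (16 * p ^+ 6 / Dn c n).

Definition delta9 (a b c p : C) (n : nat) : C := 4 * p ^+ 6 / Dn c n.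

Definition delta (i : nat) (a b c p : C) (n : nat) : C :=
  match i with
  | 0 => delta0 a b c p n
  | 1 => delta1 a b c p n
  | 2 => delta2 a b c p n
  | 3 => delta3 a b c p n
  | 4 => delta4 a b c p n
  | 5 => delta5 a b c p n
  | 6 => delta6 a b c p n
  | 7 => delta7 a b c p n
  | 8 => delta8 a b c p n
  | 9 => delta9 a b c p n
  | _ => 0
  end.

End Defs.

From mathcomp Require Import all_boot all_order all_algebra.
From mathcomp Require Import all_classical all_reals all_analysis.
From mathcomp Require Import complex.
From mathcomp Require Import ring zify.
Import Order.TTheory GRing.Theory Num.Theory.
Import ComplexField.
Import numFieldTopology.Exports numFieldNormedType.Exports.
Local Open Scope classical_set_scope.
Local Open Scope ring_scope.
Local Open Scope complex_scope.

(* Write cosh(pz) = (e^{pz} + e^{-pz})/2. The Taylor coefficients y_q(n) of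
   e^{qz} F(a,b;c;z) are Cauchy products of q^j/j! with the hypergeometric
   coefficients; convolving the two-term recurrence of the latter with q^j/j!, and
   using j q^j/j! = q q^(j-1)/(j-1)!, shows that y_q satisfies a linear recurrence of
   order 3 whose coefficients involve q. The order-10 recurrence with coefficients
   delta_i is a left multiple of it, with explicit polynomial multipliers, and
   involves q only through q^2; hence y_p, y_(-p) and their average satisfy it. By
   the Cauchy product formula and uniqueness of power series coefficients, that
   average is u, and the initial values are a direct computation. *)

Section hypergeometric_coefficients.
Context {R : realType}.
Local Notation C := R[i].

Lemma pochS (x : C) (m : nat) : poch x m.+1 = poch x m * (x + m%:R).
Proof. by rewrite /poch big_ord_recr. Qed.

Lemma poch0 (x : C) : poch x 0 = 1.
Proof. exact: big_ord0. Qed.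

Lemma poch1 (x : C) : poch x 1 = x.
Proof. by rewrite /poch big_ord1 addr0. Qed.

Lemma poch_neq0 (c : C) (m : nat) : (forall k : nat, c != - k%:R) -> poch c m != 0.
Proof. by move=> hc; apply/prodf_neq0 => i _; rewrite addr_eq0. Qed.

Lemma natr_fact_neq0 (m : nat) : (m`!%:R : C) != 0.
Proof. by rewrite pnatr_eq0 -lt0n fact_gt0. Qed.

Definition hyper_coef (a b c : C) (m : nat) : C :=
  poch a m * poch b m / (poch c m * m`!%:R).

Definition exp_coef (q : C) (j : nat) : C := q ^+ j / j`!%:R.

Definition cauchy_prod (f g : nat -> C) (n : nat) : C :=
  \sum_(j < n.+1) f j * g (n - j)%N.

Definition exp_hyper_coef (a b c q : C) : nat -> C :=
  cauchy_prod (exp_coef q) (hyper_coef a b c).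

Definition cosh_hyper_coef (a b c p : C) (n : nat) : C :=
  (exp_hyper_coef a b c p n + exp_hyper_coef a b c (- p) n) / 2.

Lemma exp_coefS (q : C) (j : nat) : exp_coef q j.+1 * j.+1%:R = q * exp_coef q j.
Proof.
rewrite /exp_coef factS natrM exprS -natr1.
by field; rewrite natr1 natr_fact_neq0 pnatr_eq0.
Qed.

Lemma hyper_coefS (a b c : C) (m : nat) : poch c m.+1 != 0 ->
  hyper_coef a b c m.+1 * ((m%:R + 1) * (m%:R + c)) =
  (m%:R + a) * (m%:R + b) * hyper_coef a b c m.
Proof.
rewrite pochS mulf_eq0 negb_or => /andP[cm cmS].
rewrite /hyper_coef !pochS factS natrM -natr1.
by field; rewrite cm cmS natr_fact_neq0 natr1 pnatr_eq0.
Qed.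

Lemma sum_natr_mul_exp_coef (q : C) (g : nat -> C) (n : nat) :
  \sum_(j < n.+2) j%:R * (exp_coef q j * g (n.+1 - j)%N) =
  q * cauchy_prod (exp_coef q) g n.
Proof.
rewrite big_ord_recl mul0r add0r /cauchy_prod mulr_sumr.
apply: eq_bigr => j _; rewrite /= /bump /= add1n subSS.
by rewrite mulrA [_%:R * _]mulrC exp_coefS mulrA.
Qed.

Lemma sum_sqr_natr_mul_exp_coef (q : C) (g : nat -> C) (n : nat) :
  \sum_(j < n.+3) j%:R ^+ 2 * (exp_coef q j * g (n.+2 - j)%N) =
  q * (q * cauchy_prod (exp_coef q) g n + cauchy_prod (exp_coef q) g n.+1).
Proof.
rewrite -sum_natr_mul_exp_coef /cauchy_prod -big_split mulr_sumr big_ord_recl.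
rewrite expr0n mul0r add0r; apply: eq_bigr => j _.
rewrite /= /bump /= add1n subSS.
transitivity (j.+1%:R * (exp_coef q j.+1 * j.+1%:R) * g (n.+1 - j)%N); first ring.
by rewrite exp_coefS -natr1; ring.
Qed.

Lemma sum_mul_quadratic_shift (n : nat) (F : nat -> C) (x y : C) :
  \sum_(j < n.+1) F j * (((n - j)%:R + x) * ((n - j)%:R + y)) =
  (n%:R + x) * (n%:R + y) * (\sum_(j < n.+1) F j)
  - (2 * n%:R + x + y) * (\sum_(j < n.+1) j%:R * F j)
  + \sum_(j < n.+1) j%:R ^+ 2 * F j.
Proof.
rewrite !mulr_sumr -sumrB -big_split; apply: eq_bigr => j _.
by rewrite /= natrB ?leq_ord //; ring.
Qed.

(* Residual at index m of the order-3 recurrence satisfied by the Taylor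
   coefficients of e^{qz} F(a,b;c;z). *)
Definition exp_hyper_res (a b c q : C) (y : nat -> C) (m : nat) : C :=
  let M : C := m%:R in
  (M + 1) * (M + c) * y m.+1
  - ((M * (M - 1) + 2 * q * M + c * q + (a + b + 1) * M + a * b) * y m
     - (2 * q * (M - 1) + q ^+ 2 + (a + b + 1) * q) * y m.-1 + q ^+ 2 * y m.-2).

(* Stated in the shape of [sum_mul_quadratic_shift]: (m + 1) (m + c) is written
   as (m + 1 + 0) (m + 1 + (c - 1)). *)
Lemma sum_exp_hyper_ratio (a b c q : C) (n : nat) : (forall m, poch c m != 0) ->
  \sum_(j < n.+2) exp_coef q j * hyper_coef a b c (n.+1 - j)
                   * (((n.+1 - j)%:R + 0) * ((n.+1 - j)%:R + (c - 1)))
  = \sum_(j < n.+1) exp_coef q j * hyper_coef a b c (n - j)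
                   * (((n - j)%:R + a) * ((n - j)%:R + b)).
Proof.
move=> hc; rewrite big_ord_recr /= subnn addr0 mul0r mulr0 addr0.
apply: eq_bigr => j _; rewrite subSn ?leq_ord // -[LHS]mulrA -[RHS]mulrA.
rewrite -natr1 addr0 -addrA [1 + _]addrC subrK.
by rewrite hyper_coefS // [X in _ = _ * X]mulrC.
Qed.

Lemma exp_hyper_res_eq0 (a b c q : C) (m : nat) : (forall k, poch c k != 0) ->
  (2 <= m)%N -> exp_hyper_res a b c q (exp_hyper_coef a b c q) m = 0.
Proof.
case: m => [|[|n]] // hc _.
have E := sum_exp_hyper_ratio a b c q n.+2 hc.
rewrite (sum_mul_quadratic_shift n.+3 (fun j => exp_coef q j * hyper_coef a b c (n.+3 - j))) in E.
rewrite (sum_mul_quadratic_shift n.+2 (fun j => exp_coef q j * hyper_coef a b c (n.+2 - j))) in E.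
rewrite !sum_natr_mul_exp_coef !sum_sqr_natr_mul_exp_coef in E.
rewrite -[\sum_(j < n.+4) _]/(exp_hyper_coef a b c q n.+3) in E.
rewrite -[\sum_(j < n.+3) _]/(exp_hyper_coef a b c q n.+2) in E.
rewrite -/(exp_hyper_coef a b c q) in E.
move/eqP: E; rewrite -subr_eq0 => /eqP E.
by rewrite -E /exp_hyper_res /=; ring.
Qed.

(* [delta_cert j] multiplies the order-3 recurrence taken at n - j; these
   multipliers exhibit the delta-recurrence as a left multiple of it, which makes
   [delta_certificate] a rational-function identity. *)
Definition delta_cert (j : nat) (a b c q N : C) : C :=
  match j with
  | 0 => N * c * (c - 2) * (c + N - 1)
  | 1 => 6 * c - 2 * c ^+ 2 - 2 * c ^+ 2 * q + c ^+ 3 * q - 10 * b * c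
      + 4 * b * c ^+ 2 - 10 * a * c + 4 * a * c ^+ 2 + 16 * a * b - 4 * a * b * c
      - a * b * c ^+ 2 - 12 * N * c - 4 * N * c * q + 4 * N * c ^+ 2
      + 2 * N * c ^+ 2 * q + 10 * N * b * c - 3 * N * b * c ^+ 2 + 10 * N * a * c
      - 3 * N * a * c ^+ 2 - 16 * N * a * b + 4 * N * a * b * c + 4 * N ^+ 2 * c
      - N ^+ 2 * c ^+ 2 - 2 * N ^+ 2 * b * c - 2 * N ^+ 2 * a * c
      + 4 * N ^+ 2 * a * b
  | 2 => - 12 - 48 * q ^+ 2 - 8 * c - 6 * c * q + 10 * c * q ^+ 2 + c ^+ 2 * q
      + c ^+ 2 * q ^+ 2 + 16 * b * c + 10 * b * c * q - 3 * b * c ^+ 2 * q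
      + 12 * b ^+ 2 - 8 * b ^+ 2 * c + 16 * a * c + 10 * a * c * q
      - 3 * a * c ^+ 2 * q - 46 * a * b - 16 * a * b * q - 6 * a * b * c
      + 4 * a * b * c * q + 10 * a * b ^+ 2 + 2 * a * b ^+ 2 * c + 12 * a ^+ 2
      - 8 * a ^+ 2 * c + 10 * a ^+ 2 * b + 2 * a ^+ 2 * b * c - 4 * a ^+ 2 * b ^+ 2
      + 7 * N + 28 * N * q ^+ 2 + 9 * N * c + 8 * N * c * q - 4 * N * c * q ^+ 2
      - 2 * N * c ^+ 2 * q - 12 * N * b * c - 4 * N * b * c * q - 7 * N * b ^+ 2
      + 3 * N * b ^+ 2 * c - 12 * N * a * c - 4 * N * a * c * q + 34 * N * a * b
      + 8 * N * a * b * q + 2 * N * a * b * c - 4 * N * a * b ^+ 2 - 7 * N * a ^+ 2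
      + 3 * N * a ^+ 2 * c - 4 * N * a ^+ 2 * b - N ^+ 2 - 4 * N ^+ 2 * q ^+ 2
      - 2 * N ^+ 2 * c + 2 * N ^+ 2 * b * c + N ^+ 2 * b ^+ 2 + 2 * N ^+ 2 * a * c
      - 6 * N ^+ 2 * a * b + N ^+ 2 * a ^+ 2
  | 3 => 16 + 8 * q + 256 * q ^+ 2 + 32 * q ^+ 3 + 5 * c * q - 32 * c * q ^+ 2
      - 4 * c * q ^+ 3 - c ^+ 2 * q ^+ 2 - 4 * b - 16 * b * q ^+ 2 - 8 * b * c * q
      - 2 * b * c * q ^+ 2 - 16 * b ^+ 2 - 8 * b ^+ 2 * q + 3 * b ^+ 2 * c * q
      + 4 * b ^+ 3 - 4 * a - 16 * a * q ^+ 2 - 8 * a * c * q - 2 * a * c * q ^+ 2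
      + 33 * a * b + 28 * a * b * q + 8 * a * b * q ^+ 2 + 2 * a * b * c * q
      - 4 * a * b ^+ 2 - 4 * a * b ^+ 2 * q - a * b ^+ 3 - 16 * a ^+ 2
      - 8 * a ^+ 2 * q + 3 * a ^+ 2 * c * q - 4 * a ^+ 2 * b - 4 * a ^+ 2 * b * q
      + 2 * a ^+ 2 * b ^+ 2 + 4 * a ^+ 3 - a ^+ 3 * b - 8 * N - 2 * N * q
      - 112 * N * q ^+ 2 - 8 * N * q ^+ 3 - 4 * N * c * q + 8 * N * c * q ^+ 2
      + N * b + 4 * N * b * q ^+ 2 + 4 * N * b * c * q + 8 * N * b ^+ 2
      + 2 * N * b ^+ 2 * q - N * b ^+ 3 + N * a + 4 * N * a * q ^+ 2
      + 4 * N * a * c * q - 16 * N * a * b - 12 * N * a * b * q + N * a * b ^+ 2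
      + 8 * N * a ^+ 2 + 2 * N * a ^+ 2 * q + N * a ^+ 2 * b - N * a ^+ 3 + N ^+ 2
      + 12 * N ^+ 2 * q ^+ 2 - N ^+ 2 * b ^+ 2 + 2 * N ^+ 2 * a * b
      - N ^+ 2 * a ^+ 2
  | 4 => - 7 * q - 405 * q ^+ 2 - 124 * q ^+ 3 - 4 * q ^+ 4 + 22 * c * q ^+ 2
      + 8 * c * q ^+ 3 + b * q + 44 * b * q ^+ 2 + 4 * b * q ^+ 3
      + 2 * b * c * q ^+ 2 + 7 * b ^+ 2 * q + b ^+ 2 * q ^+ 2 - b ^+ 3 * q + a * q
      + 44 * a * q ^+ 2 + 4 * a * q ^+ 3 + 2 * a * c * q ^+ 2 - 14 * a * b * q
      - 14 * a * b * q ^+ 2 + a * b ^+ 2 * q + 7 * a ^+ 2 * q + a ^+ 2 * q ^+ 2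
      + a ^+ 2 * b * q - a ^+ 3 * q + 2 * N * q + 140 * N * q ^+ 2 + 24 * N * q ^+ 3
      - 4 * N * c * q ^+ 2 - 8 * N * b * q ^+ 2 - 2 * N * b ^+ 2 * q
      - 8 * N * a * q ^+ 2 + 4 * N * a * b * q - 2 * N * a ^+ 2 * q
      - 12 * N ^+ 2 * q ^+ 2
  | 5 => 197 * q ^+ 2 + 152 * q ^+ 3 + 12 * q ^+ 4 - 4 * c * q ^+ 3
      - 28 * b * q ^+ 2 - 8 * b * q ^+ 3 - b ^+ 2 * q ^+ 2 - 28 * a * q ^+ 2
      - 8 * a * q ^+ 3 + 6 * a * b * q ^+ 2 - a ^+ 2 * q ^+ 2 - 56 * N * q ^+ 2
      - 24 * N * q ^+ 3 + 4 * N * b * q ^+ 2 + 4 * N * a * q ^+ 2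
      + 4 * N ^+ 2 * q ^+ 2
  | 6 => - 60 * q ^+ 3 - 12 * q ^+ 4 + 4 * b * q ^+ 3 + 4 * a * q ^+ 3 + 8 * N * q ^+ 3
  | 7 => 4 * q ^+ 4
  | _ => 0
  end.

Lemma delta_certificate (a b c q : C) (y : nat -> C) (n : nat) :
  (9 <= n)%N -> Dn c n != 0 ->
  Dn c n * (y n.+1 - \sum_(i < 10) delta i a b c q n * y (n - i)%N) =
  \sum_(j < 8) delta_cert j a b c q n%:R * exp_hyper_res a b c q y (n - j)%N.
Proof.
case: n => [|[|[|[|[|[|[|[|[|k]]]]]]]]] // _.
rewrite /Dn !mulf_eq0 !negb_or => /andP[/andP[/andP[/andP[/andP[c2 c0] N0] N1] cN1] cN].
rewrite !big_ord_recr !big_ord0 /= !subSS !subn0 /exp_hyper_res /=.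
rewrite /delta0 /delta1 /delta2 /delta3 /delta4 /delta5 /delta6 /delta7 /delta8 /delta9 /Dn /=.
by field; rewrite -natrD c0 c2 N0 N1 cN1 cN.
Qed.

Lemma delta_rec (a b c q : C) (y : nat -> C) (n : nat) :
  (9 <= n)%N -> Dn c n != 0 ->
  (forall m, (2 <= m)%N -> exp_hyper_res a b c q y m = 0) ->
  y n.+1 = \sum_(i < 10) delta i a b c q n * y (n - i)%N.
Proof.
move=> n9 hD hy; apply/eqP; rewrite -subr_eq0.
have E := @delta_certificate a b c q y n n9 hD.
rewrite [RHS]big1 in E; last by move=> j _; rewrite hy ?mulr0 //; have := ltn_ord j; lia.
by move/eqP: E; rewrite mulf_eq0 (negbTE hD).
Qed.

Lemma Dn_neq0 (c : C) (n : nat) : (forall k : nat, c != - k%:R) -> c != 2 ->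
  (0 < n)%N -> Dn c n != 0.
Proof.
move=> hc c2 n0; rewrite /Dn !mulf_neq0 ?subr_eq0 ?pnatr_eq0 -?lt0n //.
- by have := hc 0%N; rewrite mulr0n oppr0.
- by rewrite -(prednK n0) -natr1 addrA -subr_eq0 addrK addr_eq0.
- by rewrite addr_eq0.
Qed.

Lemma delta_oppr (i : nat) (a b c p : C) (n : nat) :
  delta i a b c (- p) n = delta i a b c p n.
Proof.
have sqrN (k : nat) : (- p) ^+ k.*2 = p ^+ k.*2 by rewrite -mul2n !exprM sqrrN.
case: i => [|[|[|[|[|[|[|[|[|[|i]]]]]]]]]] //=;
  by rewrite /delta1 /delta2 /delta3 /delta4 /delta5 /delta6 /delta7 /delta8 /delta9
    ?(sqrN 1%N) ?(sqrN 2%N) ?(sqrN 3%N).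
Qed.

Lemma cosh_hyper_coef_rec (a b c p : C) (n : nat) :
  (forall k : nat, c != - k%:R) -> c != 2 -> (9 <= n)%N ->
  cosh_hyper_coef a b c p n.+1 =
  \sum_(i < 10) delta i a b c p n * cosh_hyper_coef a b c p (n - i)%N.
Proof.
move=> hc c2 n9.
have hD : Dn c n != 0 by apply: Dn_neq0; rewrite // (leq_trans _ n9).
have hres q m : (2 <= m)%N -> exp_hyper_res a b c q (exp_hyper_coef a b c q) m = 0.
  by apply: exp_hyper_res_eq0 => k; exact: poch_neq0.
rewrite /cosh_hyper_coef !(@delta_rec a b c _ _ n n9 hD (hres _)) -big_split /= mulr_suml.
by apply: eq_bigr => i _; rewrite delta_oppr; ring.
Qed.

End hypergeometric_coefficients.

Section complex_series.
Context {R : realType}.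
Local Notation C := R[i].

Lemma normc_real (x : R) : `|x%:C| = `|x|%:C.
Proof. by rewrite normc_def /= expr0n /= addr0 sqrtr_sqr. Qed.

Lemma normc_ge_Im (x : C) : `|complex.Im x|%:C <= `|x|.
Proof. by rewrite normc_def lecR -sqrtr_sqr ler_wsqrtr // lerDr sqr_ge0. Qed.

Lemma ge0_complexRe (x : C) : 0 <= x -> x = (complex.Re x)%:C.
Proof. by move=> x0; rewrite RRe_real // ger0_real. Qed.

Lemma cvg_real_complex (f : nat -> R) (l : R) :
  f @ \oo --> l -> (fun n => (f n)%:C) @ \oo --> l%:C.
Proof.
move=> fl; apply/cvgrPdist_lt => e e0.
have er0 : 0 < complex.Re e by rewrite -ltcR -ge0_complexRe // ltW.
move/cvgrPdist_lt: fl => /(_ _ er0); apply: filterS => n.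
by rewrite -rmorphB normc_real [e]ge0_complexRe ?ltW // ltcR.
Qed.

Lemma cvg_norm_le (f h : nat -> C) (l : C) :
  h @ \oo --> 0 -> (forall n, `|f n - l| <= h n) -> f @ \oo --> l.
Proof.
move=> h0 fh; apply/cvgrPdist_lt => e e0.
move/cvgrPdist_lt: h0 => /(_ _ e0); apply: filterS => n.
rewrite sub0r normrN distrC => hn; apply: le_lt_trans (fh n) _.
by apply: le_lt_trans hn; apply: real_ler_norm; apply: ger0_real (le_trans _ (fh n)).
Qed.

Lemma cvg_exprC (x : R) : 0 <= x < 1 -> (fun n => x%:C ^+ n) @ \oo --> 0.
Proof.
move=> /andP[x0 x1]; rewrite -(rmorph0 (real_complex R)).
rewrite (funext (fun n => esym (rmorphXn (real_complex R) n x))).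
by apply/cvg_real_complex/cvg_expr; rewrite ger0_norm.
Qed.

Lemma series0 (V : zmodType) (u : nat -> V) : series u 0 = 0.
Proof. by rewrite seriesEord /= big_ord0. Qed.

Lemma series_ReIm (w : nat -> C) (n : nat) :
  series w n = (series (fun k => complex.Re (w k)) n)%:C
               + 'i * (series (fun k => complex.Im (w k)) n)%:C.
Proof.
(* [Re] and [Im] are additive only as maps on the alias [Rcomplex R]. *)
rewrite [LHS]complexE /series /= (raddf_sum (@complex.Re R : Rcomplex R -> R)).
by rewrite (raddf_sum (@complex.Im R : Rcomplex R -> R)).
Qed.

Lemma cvgn_series_geometric (w : nat -> C) (A s : C) :
  0 <= A -> 0 <= s < 1 -> (forall n, `|w n| <= A * s ^+ n) -> cvgn (series w).
Proof.
move=> A0 /andP[s0 s1] hw.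
set a := complex.Re A; set r := complex.Re s.
have a0 : 0 <= a by rewrite -ler0c -ge0_complexRe.
have r0 : 0 <= r by rewrite -ler0c -ge0_complexRe.
have r1 : r < 1 by rewrite -ltcR rmorph1 -ge0_complexRe.
have {}hw n : `|w n| <= (a * r ^+ n)%:C.
  by rewrite rmorphM rmorphXn /= -!ge0_complexRe.
have cvg_part (f : C -> R) : (forall x, `|f x|%:C <= `|x|) ->
    cvgn (series (fun n => f (w n))).
  move=> hf; apply: (@normed_cvg _ R^o).
  apply: (series_le_cvg (v_ := geometric a r)) => [n|n|n|].
  - exact: normr_ge0.
  - exact: geometric_ge0.
  - by rewrite -lecR (le_trans (hf _) (hw n)).
  - by apply: is_cvg_geometric_series; rewrite ger0_norm.
apply: (cvgP (_%:C + 'i * _%:C)); rewrite (funext (series_ReIm w)).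
apply: cvgD; first exact/cvg_real_complex/(cvg_part _ (@normc_ge_Re R)).
by apply: cvgM; [exact: cvg_cst | exact/cvg_real_complex/(cvg_part _ normc_ge_Im)].
Qed.

End complex_series.

Section cauchy_product.
Context {R : realType}.
Local Notation C := R[i].

Lemma series_cauchy_prod (f g : nat -> C) (N : nat) :
  series (cauchy_prod f g) N = \sum_(j < N) f j * series g (N - j)%N.
Proof.
elim: N => [|N IH]; first by rewrite series0 big_ord0.
rewrite seriesSr IH (eq_bigr (fun j : 'I_N.+1 =>
  f j * series g (N - j)%N + f j * g (N - j)%N)) => [|j _]; last first.
  by rewrite subSn ?leq_ord // seriesSr mulrDr.
by rewrite big_split /= big_ord_recr /= subnn series0 mulr0 addr0.
Qed.

Lemma expr_mul_sqr_le (s : C) (N : nat) : 0 <= s -> s <= 1 / 16 ->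
  s ^+ N * (N * N)%:R <= 4^-1 ^+ N.
Proof.
move=> s0 s1; apply: (@le_trans _ _ ((1 / 16) ^+ N * (2 ^ N * 2 ^ N)%:R)).
  apply: ler_pM; rewrite ?exprn_ge0 ?ler0n ?lerXn2r ?nnegrE ?(le_trans s0 s1) //.
  by rewrite ler_nat leq_mul // ltnW // ltn_expl.
rewrite natrM natrX -!exprMn.
by have -> : (1 / 16 * (2 * 2) : C) = 4^-1 by field.
Qed.

Lemma cvg_series_cauchy_prod (f g : nat -> C) (A B s lf lg : C) :
  0 <= A -> 0 <= B -> 0 <= s -> s <= 1 / 16 ->
  (forall j, `|f j| <= A * s ^+ j) -> (forall j, `|g j| <= B * s ^+ j) ->
  series f @ \oo --> lf -> series g @ \oo --> lg ->
  series (cauchy_prod f g) @ \oo --> lf * lg.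
Proof.
move=> A0 B0 s0 s16 hf hg cf cg.
pose err N := \sum_(j < N) f j * (series g N - series g (N - j)%N).
have -> : series (cauchy_prod f g) = (fun N => series f N * series g N - err N).
  apply: funext => N; rewrite series_cauchy_prod /err [series f]seriesEord /=.
  by rewrite mulr_suml -sumrB; apply: eq_bigr => j _; ring.
suff herr : err @ \oo --> 0.
  by have := cvgB (cvgM cf cg) herr; rewrite subr0; apply.
have tail N j : (j <= N)%N ->
    `|series g N - series g (N - j)%N| <= B * s ^+ (N - j) *+ j.
  move=> jN; rewrite sub_series_geq ?leq_subr //.
  apply: le_trans (ler_norm_sum _ _ _) _.
  rewrite -[in X in _ *+ X](subKn jN) -sumr_const_nat.
  apply: ler_sum_nat => m /andP[m1 _]; apply: le_trans (hg m) _.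
  by rewrite ler_wpM2l // ler_wiXn2l // (le_trans s16) // mul1r invf_le1 ?ler1n.
apply: (@cvg_norm_le _ _ (fun N => A * B * 4^-1 ^+ N)) => [|N].
  rewrite -(mulr0 (A * B)); apply: cvgMl_tmp.
  rewrite -(rmorph_nat (real_complex R)) -fmorphV; apply: cvg_exprC.
  by rewrite invr_ge0 ler0n invf_lt1 ?ltr1n.
rewrite subr0 /err; apply: le_trans (ler_norm_sum _ _ _) _.
apply: (@le_trans _ _ (\sum_(j < N) A * B * s ^+ N *+ N)); first apply: ler_sum.
  move=> j _; have jN : (j <= N)%N by apply: ltnW.
  rewrite normrM; apply: le_trans (ler_pM (normr_ge0 _) (normr_ge0 _) (hf j) (tail N j jN)) _.
  have -> : A * s ^+ j * (B * s ^+ (N - j) *+ j) = A * B * s ^+ N *+ j.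
    have -> : s ^+ N = s ^+ j * s ^+ (N - j) by rewrite -exprD subnKC.
    ring.
  by rewrite ler_wpMn2l ?mulr_ge0 ?exprn_ge0.
rewrite sumr_const card_ord -mulrnA -[X in X <= _]mulr_natr -mulrA.
by apply: ler_wpM2l; [exact: mulr_ge0 | exact: expr_mul_sqr_le].
Qed.

End cauchy_product.

Section exponential_series.
Context {R : realType}.
Local Notation C := R[i].

Lemma norm_exp_coef_le (q : C) (j : nat) : `|exp_coef q j| <= `|q| ^+ j.
Proof.
rewrite /exp_coef normrM normrX normfV (ger0_norm (ler0n _ _)).
rewrite ler_pdivrMr ?ltr0n ?fact_gt0 //.
by apply: ler_peMr; rewrite ?exprn_ge0 ?ler1n ?fact_gt0.
Qed.

Lemma ccosh_exp_series (p z lp ln : C) :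
  series (fun j => exp_coef p j * z ^+ j) @ \oo --> lp ->
  series (fun j => exp_coef (- p) j * z ^+ j) @ \oo --> ln ->
  ccosh (p * z) = (lp + ln) / 2.
Proof.
move=> hp hn.
pose g j := (exp_coef p j * z ^+ j + exp_coef (- p) j * z ^+ j) / 2.
have hg : series g @ \oo --> (lp + ln) / 2.
  rewrite (_ : series g = fun N => (series (fun j => exp_coef p j * z ^+ j) N
                          + series (fun j => exp_coef (- p) j * z ^+ j) N) / 2).
    exact: cvgMr_tmp (cvgD hp hn).
  by apply: funext => N; rewrite !seriesEord /= -big_split /= mulr_suml.
(* odd terms of [g] cancel, even ones are the terms of the cosh series *)
have even_g : series (fun k => (p * z) ^+ (2 * k) / (2 * k)`!%:R) = series g \o muln 2.
  apply: funext => K /=; elim: K => [|K IH]; first by rewrite muln0 !series0.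
  rewrite seriesSr IH mulnSr addn2 !seriesSr -addrA; congr (_ + _).
  have sqrN : (- p) ^+ (2 * K) = p ^+ (2 * K) by rewrite exprM sqrrN -exprM.
  rewrite /g /exp_coef exprS [(- p) ^+ (2 * K).+1]exprS sqrN exprMn.
  by field; rewrite !natr_fact_neq0.
rewrite /ccosh even_g; apply: cvg_lim; first exact: norm_hausdorff.
exact: (cvg_comp _ _ (cvg_mulnl 2 isT) hg).
Qed.

End exponential_series.

Section hypergeometric_bound.
Context {R : realType}.
Local Notation C := R[i].

Lemma norm_le_geometric_of_ratio (f : nat -> C) (L : C) (m0 : nat) : 1 <= L ->
  (forall m, (m0 <= m)%N -> `|f m.+1| <= L * `|f m|) ->
  forall m, `|f m| <= (\sum_(j < m0.+1) `|f j|) * L ^+ m.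
Proof.
move=> L1 hf.
have le_sum i : (i <= m0)%N -> `|f i| <= \sum_(j < m0.+1) `|f j|.
  move=> im0; rewrite (bigD1 (Ordinal (im0 : (i < m0.+1)%N))) //= lerDl.
  by apply: sumr_ge0 => j _.
elim=> [|m IH]; first by rewrite expr0 mulr1 le_sum.
have [m0m|mm0] := leqP m0 m.
  apply: le_trans (hf m m0m) _.
  by rewrite exprS mulrCA ler_wpM2l // (le_trans ler01).
apply: le_trans (le_sum _ mm0) _.
by rewrite ler_peMr ?sumr_ge0 // exprn_ege1.
Qed.

Lemma natr_gt_norm (x : C) : exists m : nat, `|x| < m%:R.
Proof.
exists (Num.Def.trunc (complex.Re `|x|)).+1.
rewrite [`|x|]ge0_complexRe // -(rmorph_nat (real_complex R)) ltcR.
exact: truncnS_gt.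
Qed.

Lemma norm_natr_add_le (x y : C) (m : nat) : 2 * (1 + `|y|) <= m%:R ->
  `|m%:R + x| <= 2 * (1 + `|x|) * `|m%:R + y|.
Proof.
move=> hm; have m1 : 1 <= (m%:R : C).
  by apply: le_trans hm; rewrite mulr_ege1 ?ler1n // lerDl.
apply: le_trans (ler_normD _ _) _; rewrite normr_nat.
apply: (@le_trans _ _ ((1 + `|x|) * m%:R)).
  by rewrite mulrDl mul1r lerD2l ler_peMr.
rewrite [2 * _]mulrC -mulrA ler_wpM2l ?addr_ge0 //.
have := lerB_normD (m%:R : C) y; rewrite normr_nat => hmy.
apply: le_trans (ler_wpM2l _ hmy) => //; rewrite -subr_ge0.
have -> : 2 * (m%:R - `|y|) - m%:R = m%:R - 2 * `|y| by ring.
by rewrite subr_ge0 (le_trans _ hm) // ler_wpM2l // lerDr.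
Qed.

Lemma norm_hyper_coef_geometric (a b c : C) : (forall k : nat, c != - k%:R) ->
  exists K L : C, [/\ 0 <= K, 1 <= L & forall m, `|hyper_coef a b c m| <= K * L ^+ m].
Proof.
move=> hc; pose L := 2 * (1 + `|a|) * (2 * (1 + `|b|)).
have L1 : 1 <= L by rewrite !mulr_ege1 ?ler1n ?lerDl.
have [m0 hm0] := natr_gt_norm (2 * (2 + `|c|)).
rewrite ger0_norm ?mulr_ge0 ?addr_ge0 // in hm0.
exists (\sum_(j < m0.+1) `|hyper_coef a b c j|), L; split => //.
  by apply: sumr_ge0 => j _.
apply: norm_le_geometric_of_ratio => // m m0m.
have hm : 2 * (2 + `|c|) <= m%:R by rewrite ltW // (lt_le_trans hm0) // ler_nat.
have hmc : 2 * (1 + `|c|) <= m%:R by apply: le_trans hm; rewrite ler_wpM2l // lerD2r ler1n.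
have hm1 : 2 * (1 + `|1|) <= m%:R :> C.
  by apply: le_trans hm; rewrite normr1 ler_wpM2l // -[1 + 1]/(2 : C) lerDl.
have pos : 0 < `|m%:R + 1| * `|m%:R + c| :> C.
  by rewrite mulr_gt0 // normr_gt0 ?natr1 ?pnatr_eq0 // addrC addr_eq0 hc.
rewrite -(ler_pM2r pos) -!normrM [_ * (_ * _)]hyper_coefS ?poch_neq0 // !normrM.
rewrite [L * _ * _]mulrAC ler_wpM2r // /L mulrACA.
by apply: ler_pM; rewrite ?norm_natr_add_le.
Qed.

End hypergeometric_bound.

Section power_series_uniqueness.
Context {R : realType}.
Local Notation C := R[i].

Lemma sum_expr_le2 (rho : C) (m : nat) : 0 <= rho -> rho <= 1 / 2 ->
  \sum_(i < m) rho ^+ i <= 2.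
Proof.
move=> r0 r1; suff : \sum_(i < m) rho ^+ i <= 2 - 2 * rho ^+ m.
  by move/le_trans; apply; rewrite lerBlDr lerDl mulr_ge0 // exprn_ge0.
elim: m => [|m IH]; first by rewrite big_ord0 expr0 mulr1 subrr.
rewrite big_ord_recl expr0 (eq_bigr (fun i : 'I_m => rho * rho ^+ i)) => [|i _]; last first.
  by rewrite /= /bump /= add1n exprS.
rewrite -mulr_sumr; apply: le_trans (_ : 1 + rho * (2 - 2 * rho ^+ m) <= _).
  by rewrite lerD2l ler_wpM2l.
rewrite -subr_ge0 (_ : _ - _ = 1 - 2 * rho); last by rewrite exprS; ring.
by rewrite subr_ge0 -ler_pdivlMl ?ltr0n // mulrC.
Qed.

Lemma cvg0_bounded (u : nat -> C) : u @ \oo --> 0 ->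
  exists K, 0 <= K /\ forall n, `|u n| <= K.
Proof.
move/cvgr0_norm_lt => /(_ _ ltr01) [N _ hN].
exists (1 + \sum_(n < N) `|u n|); split; first by rewrite addr_ge0 ?sumr_ge0.
move=> n; have [nN|Nn] := ltnP n N; last by rewrite (le_trans (ltW (hN n Nn))) // lerDl sumr_ge0.
rewrite (bigD1 (Ordinal nN)) //= addrCA lerDl addr_ge0 ?sumr_ge0 //.
Qed.

Lemma norm_leading_coef_le (w : nat -> C) (r K s : C) (k : nat) :
  0 < r -> (forall n, `|w n| * r ^+ n <= K) -> (forall i, (i < k)%N -> w i = 0) ->
  0 < s -> s <= r / 2 -> series (fun n => w n * s ^+ n) @ \oo --> 0 ->
  `|w k| * s ^+ k <= 2 * K * (s / r) ^+ k.+1.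
Proof.
move=> r0 hK wk0 s0 sr hs; set rho := s / r.
have rho0 : 0 <= rho by rewrite divr_ge0 ?ltW.
have rho1 : rho <= 1 / 2 by rewrite ler_pdivrMr // mul1r mulrC.
have srho : s = rho * r by rewrite divfK // gt_eqF.
set f := fun n => w n * s ^+ n.
apply/ler_addgt0Pr => e e0.
move/cvgr0_norm_lt: hs => /(_ _ e0) [N0 _ hN0].
pose N := maxn N0 k.+1.
have fN : series f N = w k * s ^+ k + \sum_(k.+1 <= n < N) f n.
  rewrite -[series f N](subrK (series f k.+1)) sub_series_geq ?leq_maxr // seriesSr.
  rewrite (_ : series f k = 0) ?add0r 1?addrC //.
  by rewrite seriesEord /= big1 // => i _; rewrite /f wk0 // mul0r.
have tail : `|\sum_(k.+1 <= n < N) f n| <= 2 * K * rho ^+ k.+1.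
  apply: le_trans (ler_norm_sum _ _ _) _.
  apply: (@le_trans _ _ (\sum_(k.+1 <= n < N) K * rho ^+ n)).
    apply: ler_sum_nat => n _.
    rewrite /f normrM normrX (ger0_norm (ltW s0)) srho exprMn mulrCA mulrC.
    by rewrite ler_wpM2r ?exprn_ge0.
  rewrite -mulr_sumr -[k.+1]add0n big_addn big_mkord.
  rewrite (eq_bigr (fun i : 'I__ => rho ^+ i * rho ^+ k.+1)) => [|i _]; last by rewrite exprD.
  have K0 : 0 <= K by apply: le_trans (hK 0%N); rewrite mulr_ge0 // exprn_ge0 // ltW.
  by rewrite -mulr_suml mulrA [2 * K]mulrC ler_wpM2r ?exprn_ge0 // ler_wpM2l ?sum_expr_le2.
rewrite -(ger0_norm (ltW s0)) -normrX -normrM.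
have -> : w k * s ^+ k = series f N - \sum_(k.+1 <= n < N) f n by rewrite fN addrK.
apply: le_trans (ler_normB _ _) _.
rewrite addrC lerD // ltW //; apply: hN0; exact: leq_maxl.
Qed.

Lemma eq0_of_le_mul_small (x k d : C) : 0 <= x -> 0 < d -> 0 <= k ->
  (forall s, 0 < s -> s <= d -> x <= k * s) -> x = 0.
Proof.
move=> x0 d0 k0 hx; apply/eqP; rewrite eq_le x0 andbT.
rewrite real_leNgt ?ger0_real //; apply/negP => {}x0.
(* at s := d x / (x + k d) the hypothesis would give x <= k s < x *)
have xkd : 0 < x + k * d by rewrite (lt_le_trans x0) // lerDl mulr_ge0 // ltW.
have s0 : 0 < d * x / (x + k * d) by rewrite !divr_gt0 ?mulr_gt0.
have sd : d * x / (x + k * d) <= d.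
  by rewrite ler_pdivrMr // ler_pM2l // lerDl mulr_ge0 // ltW.
have := hx _ s0 sd; rewrite mulrA ler_pdivlMr // -subr_ge0.
have -> : k * (d * x) - x * (x + k * d) = - (x * x) by ring.
by rewrite oppr_ge0 lt_geF // mulr_gt0.
Qed.

Lemma power_series_coef_eq0 (w : nat -> C) (r : C) : 0 < r ->
  (forall s, 0 < s -> s <= r -> series (fun n => w n * s ^+ n) @ \oo --> 0) ->
  forall n, w n = 0.
Proof.
move=> r0 hs.
have [K [K0 hK]] : exists K, 0 <= K /\ forall n, `|w n| * r ^+ n <= K.
  have [K [K0 hK]] := cvg0_bounded _ (cvg_series_cvg_0 (cvgP _ (hs r r0 (lexx r)))).
  by exists K; split => // n; rewrite -(ger0_norm (ltW r0)) -normrX -normrM.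
elim/ltn_ind => k IH; apply/normr0_eq0.
apply: (@eq0_of_le_mul_small _ (2 * K / r ^+ k.+1) (r / 2)) => //.
- by rewrite divr_gt0.
- by rewrite divr_ge0 ?exprn_ge0 ?mulr_ge0 // ltW.
move=> s s0 sr.
have sr' : s <= r.
  apply: le_trans sr _; rewrite ler_pdivrMr ?ltr0n //.
  by apply: ler_peMr; [exact: ltW | rewrite ler1n].
have := norm_leading_coef_le _ _ _ _ _ r0 hK IH s0 sr (hs s s0 sr').
rewrite expr_div_n exprS -ler_pdivlMr ?exprn_gt0 //.
have -> : 2 * K * (s * s ^+ k / r ^+ k.+1) / s ^+ k = 2 * K / r ^+ k.+1 * s.
  by field; rewrite ?expf_neq0 ?gt_eqF.
by [].
Qed.

Lemma power_series_coef_uniq (u v : nat -> C) (r : C) (f : C -> C) : 0 < r ->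
  (forall s, 0 < s -> s <= r -> series (fun n => u n * s ^+ n) @ \oo --> f s) ->
  (forall s, 0 < s -> s <= r -> series (fun n => v n * s ^+ n) @ \oo --> f s) ->
  u = v.
Proof.
move=> r0 hu hv; apply/funext => n; apply/eqP; rewrite -subr_eq0; apply/eqP; move: n.
apply: (power_series_coef_eq0 _ _ r0) => s s0 sr; rewrite -(subrr (f s)).
rewrite (_ : series _ = fun N => series (fun n => u n * s ^+ n) N
                                 - series (fun n => v n * s ^+ n) N).
  exact: cvgB (hu s s0 sr) (hv s s0 sr).
by apply: funext => N; rewrite !seriesEord /= -sumrB; apply: eq_bigr => n _; ring.
Qed.

End power_series_uniqueness.

Section cosh_hypergeometric_series.
Context {R : realType}.
Local Notation C := R[i].

Lemma cauchy_prod_mul_expr (f g : nat -> C) (z : C) (n : nat) :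
  cauchy_prod (fun j => f j * z ^+ j) (fun m => g m * z ^+ m) n =
  cauchy_prod f g n * z ^+ n.
Proof.
rewrite /cauchy_prod mulr_suml; apply: eq_bigr => j _.
have -> : z ^+ n = z ^+ j * z ^+ (n - j) by rewrite -exprD subnKC // leq_ord.
ring.
Qed.

Lemma norm_mul_expr_le (f : nat -> C) (K L M z : C) : 0 <= K -> 0 <= L -> L <= M ->
  (forall m, `|f m| <= K * L ^+ m) -> forall m, `|f m * z ^+ m| <= K * (M * `|z|) ^+ m.
Proof.
move=> K0 L0 LM hf m; rewrite normrM normrX.
apply: le_trans (ler_wpM2r (exprn_ge0 _ (normr_ge0 _)) (hf m)) _.
rewrite -mulrA -exprMn ler_wpM2l //; apply: lerXn2r; rewrite ?nnegrE ?mulr_ge0 //.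
- exact: le_trans LM.
- exact: ler_wpM2r.
Qed.

Lemma cvg_series_cosh_hyper (a b c p : C) : (forall k : nat, c != - k%:R) ->
  exists r : C, [/\ 0 < r, r < 1 & forall z : C, `|z| <= r ->
    series (fun n => cosh_hyper_coef a b c p n * z ^+ n) @ \oo -->
    ccosh (p * z) * hypF a b c z].
Proof.
move=> hc; have [K [L [K0 L1 hK]]] := norm_hyper_coef_geometric a b c hc.
pose M := 1 + `|p| + L.
have M1 : 1 <= M by rewrite /M -addrA lerDl addr_ge0 // (le_trans ler01).
have M0 : 0 < M := lt_le_trans ltr01 M1.
have M0' : 0 <= M := ltW M0.
(* |z| <= 1 / (16 M) makes all terms below dominated by (M |z|)^n with M |z| <= 1/16,
   as required by [cvg_series_cauchy_prod]. *)
exists (1 / (16 * M)); split; first by rewrite divr_gt0 ?mulr_gt0.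
  by rewrite mul1r invf_lt1 ?mulr_gt0 // (lt_le_trans (_ : 1 < 16 * 1)) ?ler_wpM2l // mulr1 ltr1n.
move=> z hz; set s := M * `|z|.
have s0 : 0 <= s by rewrite mulr_ge0.
have s16 : s <= 1 / 16.
  apply: le_trans (ler_wpM2l M0' hz) _.
  by rewrite (_ : M * (1 / (16 * M)) = 1 / 16) //; field; rewrite gt_eqF.
have s1 : 0 <= s < 1 by rewrite s0 (le_lt_trans s16) // mul1r invf_lt1 ?ltr1n.
have pM : `|p| <= M by rewrite /M -addrA addrCA lerDl addr_ge0 // (le_trans ler01).
have LM : L <= M by rewrite /M lerDr addr_ge0.
have hexp q : `|q| = `|p| -> forall j, `|exp_coef q j * z ^+ j| <= 1 * s ^+ j.
  move=> hq; apply: (norm_mul_expr_le _ 1 `|q|); rewrite ?hq // => j.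
  by rewrite mul1r -hq norm_exp_coef_le.
have hhyp := norm_mul_expr_le _ _ _ _ z K0 (le_trans ler01 L1) LM hK.
have cvg_exp q (hq : `|q| = `|p|) := cvgn_series_geometric _ _ _ ler01 s1 (hexp q hq).
have cvg_hyp := cvgn_series_geometric _ _ _ K0 s1 hhyp.
have prod q (hq : `|q| = `|p|) := cvg_series_cauchy_prod _ _ _ _ _ _ _ ler01 K0 s0 s16
  (hexp q hq) hhyp (cvg_exp q hq) cvg_hyp.
rewrite (ccosh_exp_series _ _ _ _ (cvg_exp p erefl) (cvg_exp (- p) (normrN p))).
rewrite (_ : forall x y t : C, (x + y) / 2 * t = (x * t + y * t) / 2); last by move=> *; ring.
rewrite (_ : series _ = fun N => (series (cauchy_prod (fun j => exp_coef p j * z ^+ j)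
  (fun m => hyper_coef a b c m * z ^+ m)) N + series (cauchy_prod
  (fun j => exp_coef (- p) j * z ^+ j) (fun m => hyper_coef a b c m * z ^+ m)) N) / 2).
  exact: cvgMr_tmp (cvgD (prod p erefl) (prod (- p) (normrN p))).
apply: funext => N; rewrite !seriesEord /= -big_split /= mulr_suml.
by apply: eq_bigr => n _; rewrite !cauchy_prod_mul_expr /cosh_hyper_coef /exp_hyper_coef; ring.
Qed.

End cosh_hypergeometric_series.

Theorem theorem3p11 (R : realType) (a b c p : R[i]) (u : nat -> R[i]) :
  (forall k : nat, c != - k%:R) ->
  c != 2 ->
  (forall z : R[i], `|z| < 1 ->
     series (fun n : nat => u n * z ^+ n) @ \oo --> ccosh (p * z) * hypF a b c z) ->
  (u 0%N = 1 /\
      u 1%N = a * b / c /\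
      u 2%N = poch a 2 * poch b 2 / (2 * poch c 2) + p ^+ 2 / 2 /\
      u 3%N = a * b * p ^+ 2 / (2 * c) + poch a 3 * poch b 3 / (6 * poch c 3) /\
      u 4%N = poch a 2 * poch b 2 * p ^+ 2 / (4 * poch c 2)
              + poch a 4 * poch b 4 / (24 * poch c 4) + p ^+ 4 / 24 /\
      u 5%N = a * b * p ^+ 4 / (24 * c)
              + poch a 3 * poch b 3 * p ^+ 2 / (12 * poch c 3)
              + poch a 5 * poch b 5 / (120 * poch c 5) /\
      u 6%N = poch a 2 * poch b 2 * p ^+ 4 / (48 * poch c 2)
              + poch a 4 * poch b 4 * p ^+ 2 / (48 * poch c 4)
              + poch a 6 * poch b 6 / (720 * poch c 6) + p ^+ 6 / 720 /\
      u 7%N = a * b * p ^+ 6 / (720 * c)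
              + poch a 3 * poch b 3 * p ^+ 4 / (144 * poch c 3)
              + poch a 5 * poch b 5 * p ^+ 2 / (240 * poch c 5)
              + poch a 7 * poch b 7 / (5040 * poch c 7) /\
      u 8%N = poch a 2 * poch b 2 * p ^+ 6 / (1440 * poch c 2)
              + poch a 4 * poch b 4 * p ^+ 4 / (576 * poch c 4)
              + poch a 6 * poch b 6 * p ^+ 2 / (1440 * poch c 6)
              + poch a 8 * poch b 8 / ((8`!)%:R * poch c 8) + p ^+ 8 / (8`!)%:R /\
      u 9%N = a * b * p ^+ 8 / ((8`!)%:R * c)
              + poch a 3 * poch b 3 * p ^+ 6 / (4320 * poch c 3)
              + poch a 5 * poch b 5 * p ^+ 4 / (2880 * poch c 5)
              + poch a 7 * poch b 7 * p ^+ 2 / (10080 * poch c 7)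
              + poch a 9 * poch b 9 / ((9`!)%:R * poch c 9)
    /\ forall n : nat, (9 <= n)%N ->
        u n.+1 = \sum_(i < 10) delta i a b c p n * u (n - i)%N).
Proof.
move=> hc c2 hu.
have [r [r0 r1 hv]] := cvg_series_cosh_hyper a b c p hc.
have -> : u = cosh_hyper_coef a b c p.
  apply: (power_series_coef_uniq _ _ _ (fun s => ccosh (p * s) * hypF a b c s) r0).
  - by move=> s s0 sr; apply: hu; rewrite ger0_norm ?ltW // (le_lt_trans sr).
  - by move=> s s0 sr; apply: hv; rewrite ger0_norm // ltW.
have hp m := poch_neq0 c m hc.
have c0 : c != 0 by have := hc 0%N; rewrite mulr0n oppr0.
do !split; last by move=> n n9; exact: cosh_hyper_coef_rec.
all: rewrite /cosh_hyper_coef /exp_hyper_coef /cauchy_prod !big_ord_recr !big_ord0 /=;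
  rewrite /exp_coef /hyper_coef ?subSS ?subn0 ?subnn ?poch0 ?poch1 ?factS ?fact0 ?natrM;
  by field; rewrite ?hp ?c0.
Qed.
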